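(* Let $\mathbb F x$ be a one-dimensional vector space and $S(Lev,\mathbb F x)=\bigoplus_{n\ge1}(Lev(n)\otimes(\mathbb F x)^{\otimes n})_{\Sigma_n}$ the free level algebra on one generator. The linear map $S(Lev,\mathbb F x)\to\mathbb F[\mathrm{BHS}]$ sending the class of $I\otimes x^{\otimes n}$ ($I\in\mathscr L(n)$) to $(|I_0|,|I_1|,\dots)$ is an isomorphism of vector spaces, and it is an isomorphism of level algebras when $\mathbb F[\mathrm{BHS}]$ is given the bilinear extension of the product $(u,v)\mapsto u\cdot v$.
   Context: $[n]=\{1,\dots,n\}$. $\mathscr L(n)$: families $I=(I_i)_{i\ge0}$ of disjoint subsets of $[n]$ with union $[n]$ and $\sum_i|I_i|/2^i=1$, with $\Sigma_n$ acting by $\sigma\cdot I=(\sigma(I_i))_i$. Equivalently $I$ is the map $h:[n]\to\mathbb N$ with $h(x)=j$ iff $x\in I_j$. These form a set operad with unit $1\mapsto0$ and full composition $\mu(h\otimes g_1\otimes\dots\otimes g_n)$ sending $m_1+\dots+m_{j-1}+t$ ($1\le t\le m_j$) to $h(j)+g_j(t)$; $Lev=\mathbb F[\mathscr L]$ is the linear operad it spans, whose algebras are level algebras (vector spaces with a commutative bilinear product $*$ with $(a*b)*(c*d)=(a*c)*(b*d)$). The level product on the free algebra $S(Lev,\mathbb F x)$ is $a*b=\mu(h_2\otimes a\otimes b)$ with $h_2:[2]\to\mathbb N$ constant equal to $1$. $\mathrm{BHS}=\bigsqcup_{n\ge1}\mathrm{BHS}(n)$, $\mathrm{BHS}(n)=\{u\in\mathbb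 N^{\mathbb N}:\sum_iu(i)=n,\ \sum_iu(i)/2^i=1\}$; for $u,v\in\mathrm{BHS}$, $u\cdot v=(0,u(0)+v(0),u(1)+v(1),\dots)$. *)

From HB Require Import structures.
From mathcomp Require Import all_boot all_order all_algebra.
From mathcomp Require Import fingroup perm.
From mathcomp Require Import finmap.
From mathcomp Require Import monalg.

Set Implicit Arguments.
Unset Strict Implicit.
Unset Printing Implicit Defensive.

Import GRing.Theory Num.Theory.
Local Open Scope ring_scope.
Local Open Scope fset_scope.

(* An element I of L(n) is encoded by its level map h : [n] -> N       *)
(* (h x = j iff x \in I_j), written as the sequence                    *)
(* [:: h 1; ...; h n] (position k-1 holds h k).                        *)

(* sum_i |I_i| / 2^i  =  sum_{x in [n]} 2^(- h x) *)
Definition lev_weight (h : seq nat) : rat := \sum_(x <- h) (2%:R ^- x).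

Definition is_level (h : seq nat) : bool := lev_weight h == 1.

Definition is_level_n (n : nat) (h : seq nat) : bool :=
  (size h == n) && is_level h.

(* the disjoint union of the L(n), n >= 1 (n = size h; a level map of size
   0 has weight 0, so never occurs) : basis of  (+)_n Lev(n) (x) (Fx)^(x)n *)
Definition Ltree := {h : seq nat | is_level h}.

Definition arity (I : Ltree) : nat := size (val I).

(* Sigma_n action: sigma . I = (sigma(I_i))_i, i.e. sigma . h = h o sigma^-1 *)
Definition perm_act (n : nat) (h : seq nat) (s : 'S_n) : seq nat :=
  [seq nth 0%N h (val (s^-1%g i)) | i <- enum 'I_n].

(* full composition  mu(h (x) g_1 (x) ... (x) g_k) : position
   m_1+...+m_{j-1}+t  is sent to  h(j) + g_j(t). *)
Definition mu (h : seq nat) (gs : seq (seq nat)) : seq nat :=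
  flatten [seq map (addn hg.1) hg.2 | hg <- zip h gs].

Definition h2 : seq nat := [:: 1%N; 1%N].

(* level product on representatives: I * J = mu(h_2 (x) I (x) J)
   (the result is always a level tree; insubd is only used to avoid
   carrying the proof) *)
Definition ltree_prod (I J : Ltree) : Ltree := insubd I (mu h2 [:: val I; val J]).

(* the representative space (+)_{n>=1} Lev(n) (x) (Fx)^(x)n, identified with
   (+)_n F[L(n)] via I (x) x^(x)n |-> I *)
Definition FLev (F : fieldType) := {malg F[Ltree]}.

(* the subspace spanned by the  sigma.(I (x) x^n) - I (x) x^n  : the coinvariants
   S(Lev, Fx) are FLev / coinv_ker *)
Definition coinv_rel (I J : Ltree) : Prop :=
  exists s : 'S_(arity I), val J = perm_act (val I) s.

Definition coinv_ker (F : fieldType) (v : FLev F) : Prop :=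
  exists r : seq (F * Ltree * Ltree),
    (forall t, t \in r -> coinv_rel t.1.2 t.2) /\
    v = \sum_(t <- r) t.1.1 *: (<< t.2 >> - << t.1.2 >>).

Definition lev_mul (F : fieldType) (a b : FLev F) : FLev F :=
  \sum_(I <- msupp a) \sum_(J <- msupp b) (a@_I * b@_J) *: << ltree_prod I J >>.

(* elements of N^N with finite sum are exactly the finitely supported ones *)
Definition NN := {fsfun nat -> nat with 0%N}.

Definition bhs_size (u : NN) : nat := (\sum_(i <- finsupp u) u i)%N.
Definition bhs_weight (u : NN) : rat := \sum_(i <- finsupp u) (u i)%:R * 2%:R ^- i.

Definition is_BHS_n (n : nat) (u : NN) : bool :=
  (bhs_size u == n) && (bhs_weight u == 1).

Definition is_BHS (u : NN) : bool := (0 < bhs_size u)%N && is_BHS_n (bhs_size u) u.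

Definition BHS := {u : NN | is_BHS u}.

(* u . v = (0, u(0)+v(0), u(1)+v(1), ...) *)
Definition bhs_dot_fun (u v : NN) : NN :=
  [fsfun i in [fset j.+1 | j in finsupp u `|` finsupp v] => (u i.-1 + v i.-1)%N].

Definition bhs_wit_fun : NN := [fsfun i in [fset 1%N] => 2%N].

Lemma finsupp_bhs_wit : finsupp bhs_wit_fun = [fset 1%N].
Proof.
apply/fsetP=> x; rewrite mem_finsupp /bhs_wit_fun fsfun_fun.
by case: ifP.
Qed.

Lemma is_BHS_wit : is_BHS bhs_wit_fun.
Proof.
rewrite /is_BHS /is_BHS_n /bhs_size /bhs_weight finsupp_bhs_wit !big_seq_fset1.
by rewrite /bhs_wit_fun fsfun_fun inE eqxx.
Qed.

Definition bhs_wit : BHS := exist _ bhs_wit_fun is_BHS_wit.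

(* the product u . v on BHS (BHS is closed under it; insubd only avoids
   carrying the proof) *)
Definition bhs_dot (u v : BHS) : BHS := insubd u (bhs_dot_fun (val u) (val v)).

Definition ltype_fun (I : Ltree) : NN :=
  [fsfun i in [fset x | x in val I] => count_mem i (val I)].

(* ltype_fun I always lies in BHS(arity I); insubd only avoids carrying the proof *)
Definition ltype (I : Ltree) : BHS := insubd bhs_wit (ltype_fun I).

Definition FBHS (F : fieldType) := {malg F[BHS]}.

Definition bhs_mul (F : fieldType) (a b : FBHS F) : FBHS F :=
  \sum_(u <- msupp a) \sum_(v <- msupp b) (a@_u * b@_v) *: << bhs_dot u v >>.

(* Two level trees have the same type (|I_0|, |I_1|, ...) iff their level maps
   are permutations of each other, i.e. iff they lie in the same Sigma_n-orbit;
   and every u in BHS is the type of the level tree listing each level i exactly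
   u(i) times.  So the type map sends the basis of level trees onto the basis
   BHS, its linear extension is onto, and its kernel is spanned by differences
   of orbit-mates, which is the coinvariant relation.  The level product raises
   all levels by one and concatenates, which on types is exactly u . v, so the
   bilinear extensions of the two products correspond. *)

From HB Require Import structures.
From mathcomp Require Import all_boot all_order all_algebra.
From mathcomp Require Import fingroup perm finmap monalg.
Set Implicit Arguments.
Unset Strict Implicit.
Unset Printing Implicit Defensive.

Import GRing.Theory.
Local Open Scope ring_scope.

Lemma sumr_count_mem (T : eqType) (V : nmodType) (t s : seq T) (G : T -> V) :
  uniq t -> t =i s -> \sum_(i <- t) G i *+ count_mem i s = \sum_(x <- s) G x.
Proof.
move=> t_uniq eq_ts; rewrite -[RHS]big_undup_iterop_count [RHS](perm_big t) //.
by rewrite uniq_perm ?undup_uniq // => i; rewrite mem_undup.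
Qed.

Lemma monalgUZ (R : nzRingType) (K : choiceType) (c : R) (k : K) :
  << c *g k >> = c *: << k >>.
Proof. by apply/malgP => k'; rewrite mcoeffZ !mcoeffU mulr_natr. Qed.

Lemma monalgZE (R : nzRingType) (K : choiceType) (v : {malg R[K]}) :
  v = \sum_(k <- msupp v) v@_k *: << k >>.
Proof. by rewrite {1}(monalgE v); under eq_bigr do rewrite monalgUZ. Qed.

Section LinearBasisMap.
Variables (R : nzRingType) (K L : choiceType) (t : K -> L).
Variable phi : {linear {malg R[K]} -> {malg R[L]}}.
Hypothesis phi_basis : forall k, phi << k >> = << t k >>.

Lemma linear_basis_mapE v : phi v = \sum_(k <- msupp v) v@_k *: << t k >>.
Proof.
rewrite {1}(monalgZE v) linear_sum; apply: eq_bigr => k _.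
by rewrite linearZ phi_basis.
Qed.

Variables (g : L -> K) (gK : cancel g t).

Lemma linear_basis_map_onto w : phi (\sum_(u <- msupp w) w@_u *: << g u >>) = w.
Proof.
rewrite linear_sum [RHS]monalgZE; apply: eq_bigr => u _.
by rewrite linearZ phi_basis gK.
Qed.

Lemma linear_basis_map_kernel v :
  phi v = 0 -> v = \sum_(k <- msupp v) v@_k *: (<< k >> - << g (t k) >>).
Proof.
move=> phi_v0; have sum_reps0 : \sum_(k <- msupp v) v@_k *: << g (t k) >> = 0.
  apply/malgP => k0; rewrite mcoeff0 raddf_sum /=.
  under eq_bigr do rewrite mcoeffZ mcoeffU.
  (* The coefficient of [g u] in the sum is that of [u] in [phi v]; other
     coefficients vanish since [g \o t] is idempotent. *)
  have [<- | gtk0_neq] := eqVneq (g (t k0)) k0.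
    under eq_bigr do rewrite (inj_eq (can_inj gK)).
    have := congr1 (mcoeff (t k0)) phi_v0.
    rewrite linear_basis_mapE mcoeff0 raddf_sum => sum_t0.
    rewrite -[RHS]sum_t0; apply: eq_bigr => k _ /=.
    by rewrite mcoeffZ mcoeffU.
  rewrite big1 // => k _; case: eqP => [gtk | _]; last by rewrite mulr0.
  by rewrite -gtk gK eqxx in gtk0_neq.
under eq_bigr do rewrite scalerBr.
by rewrite sumrB sum_reps0 subr0 -monalgZE.
Qed.

End LinearBasisMap.

Section BilinearExtension.
Variables (R : comNzRingType) (K : choiceType) (op : K -> K -> K).
Implicit Types (a b : {malg R[K]}).

Definition malg_bilin a b : {malg R[K]} :=
  \sum_(u <- msupp a) \sum_(v <- msupp b) (a@_u * b@_v) *: << op u v >>.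

Lemma malg_bilinEw (S T : {fset K}) a b :
  (msupp a `<=` S)%fset -> (msupp b `<=` T)%fset ->
  malg_bilin a b = \sum_(u <- S) \sum_(v <- T) (a@_u * b@_v) *: << op u v >>.
Proof.
move=> suppS suppT; rewrite /malg_bilin (big_fset_incl _ suppS); last first.
  move=> u _ /mcoeff_outdom ->; rewrite big1 // => v _.
  by rewrite mul0r scale0r.
apply: eq_bigr => u _; rewrite (big_fset_incl _ suppT) //.
by move=> v _ /mcoeff_outdom ->; rewrite mulr0 scale0r.
Qed.

Lemma malg_bilin0l b : malg_bilin 0 b = 0.
Proof. by rewrite /malg_bilin msupp0 big_nil. Qed.

Lemma malg_bilinPl c a1 a2 b :
  malg_bilin (c *: a1 + a2) b = c *: malg_bilin a1 b + malg_bilin a2 b.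
Proof.
set S := (msupp a1 `|` msupp a2)%fset.
have suppZD : (msupp (c *: a1 + a2) `<=` S)%fset.
  apply: fsubset_trans (msuppD_le _ _) _.
  by rewrite fsetSU ?msuppZ_le.
rewrite !(@malg_bilinEw S (msupp b)) ?fsubsetUl ?fsubsetUr //.
rewrite scaler_sumr -big_split; apply: eq_bigr => u _.
rewrite scaler_sumr -big_split; apply: eq_bigr => v _.
by rewrite mcoeffD mcoeffZ mulrDl scalerDl scalerA mulrA.
Qed.

Lemma malg_bilin_sumZl (I : Type) (r : seq I) (c : I -> R) (A : I -> {malg R[K]}) b :
  malg_bilin (\sum_(i <- r) c i *: A i) b = \sum_(i <- r) c i *: malg_bilin (A i) b.
Proof.
elim: r => [|i r IHr]; first by rewrite !big_nil malg_bilin0l.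
by rewrite !big_cons malg_bilinPl IHr.
Qed.

Lemma malg_bilinUU k l : malg_bilin << k >> << l >> = << op k l >>.
Proof.
rewrite (@malg_bilinEw [fset k]%fset [fset l]%fset) ?msuppU_le //.
by rewrite !big_seq_fset1 !mcoeffUU mulr1 scale1r.
Qed.

End BilinearExtension.

Lemma malg_bilin_flip (R : comNzRingType) (K : choiceType) (op : K -> K -> K) a b :
  malg_bilin op a b = malg_bilin (fun u v => op v u) b a :> {malg R[K]}.
Proof.
rewrite /malg_bilin exchange_big; apply: eq_bigr => v _.
by apply: eq_bigr => u _; rewrite mulrC.
Qed.

Lemma malg_bilin_sumZr (R : comNzRingType) (K : choiceType) (op : K -> K -> K)
    (I : Type) (r : seq I) (c : I -> R) (B : I -> {malg R[K]}) a :
  malg_bilin op a (\sum_(i <- r) c i *: B i) = \sum_(i <- r) c i *: malg_bilin op a (B i).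
Proof.
rewrite malg_bilin_flip malg_bilin_sumZl.
by apply: eq_bigr => i _; rewrite -malg_bilin_flip.
Qed.

Lemma linear_basis_map_bilin (R : comNzRingType) (K L : choiceType)
    (op1 : K -> K -> K) (op2 : L -> L -> L) (t : K -> L)
    (phi : {linear {malg R[K]} -> {malg R[L]}}) :
    (forall k, phi << k >> = << t k >>) -> {morph t : k l / op1 k l >-> op2 k l} ->
  forall a b, phi (malg_bilin op1 a b) = malg_bilin op2 (phi a) (phi b).
Proof.
move=> phi_basis tM a b.
rewrite {1}/malg_bilin linear_sum (linear_basis_mapE phi_basis a) malg_bilin_sumZl.
apply: eq_bigr => k _.
rewrite linear_sum (linear_basis_mapE phi_basis b) malg_bilin_sumZr scaler_sumr.
by apply: eq_bigr => l _; rewrite linearZ phi_basis tM malg_bilinUU scalerA.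
Qed.

Lemma ltype_funE (I : Ltree) i : ltype_fun I i = count_mem i (val I).
Proof.
rewrite /ltype_fun fsfun_fun; case: ifPn => // i_notin.
by apply/esym/count_memPn; apply: contra i_notin => i_in; apply/imfsetP; exists i.
Qed.

Lemma finsupp_ltype_fun (I : Ltree) : finsupp (ltype_fun I) =i val I.
Proof. by move=> i; rewrite mem_finsupp ltype_funE -lt0n -has_count has_pred1. Qed.

Lemma is_BHS_ltype_fun (I : Ltree) : is_BHS (ltype_fun I).
Proof.
have sum_ltype (V : nmodType) (G : nat -> V) :
    \sum_(i <- finsupp (ltype_fun I)) G i *+ ltype_fun I i = \sum_(x <- val I) G x.
  under eq_bigr do rewrite ltype_funE.
  exact/sumr_count_mem/finsupp_ltype_fun/fset_uniq.
have size_I : bhs_size (ltype_fun I) = size (val I).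
  by rewrite -sum1_size -(sum_ltype _ (fun=> 1%N)); apply: eq_bigr => i _; rewrite natn.
have weight_I : bhs_weight (ltype_fun I) = 1.
  rewrite /bhs_weight; under eq_bigr do rewrite mulr_natl.
  by rewrite sum_ltype; apply/eqP/(valP I).
rewrite /is_BHS /is_BHS_n size_I weight_I !eqxx lt0n size_eq0 !andbT.
by apply/eqP => I_nil; have := valP I; rewrite /is_level I_nil /lev_weight big_nil.
Qed.

Lemma val_ltype (I : Ltree) : val (ltype I) = ltype_fun I.
Proof. exact/insubdK/is_BHS_ltype_fun. Qed.

Lemma ltype_eqP (I J : Ltree) : ltype I = ltype J <-> perm_eq (val I) (val J).
Proof.
split=> [eqIJ | /seq.permP eqIJ].
  by apply/allP => i _ /=; rewrite -!ltype_funE -!val_ltype eqIJ.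
by rewrite /ltype; congr insubd; apply/fsfunP => i; rewrite !ltype_funE eqIJ.
Qed.

Lemma perm_act_tuple (h : seq nat) (s : 'S_(size h)) :
  perm_act h s = [tuple tnth (in_tuple h) (s^-1%g i) | i < size h].
Proof.
by rewrite /perm_act enumT /= -map_comp; apply: eq_map => i /=; rewrite (tnth_nth 0).
Qed.

Lemma coinv_relP (I J : Ltree) : coinv_rel I J <-> ltype I = ltype J.
Proof.
rewrite ltype_eqP; split=> [[s ->] | ].
  by rewrite perm_act_tuple perm_sym; apply/(tuple_permP (t := in_tuple _)); exists s^-1%g.
rewrite perm_sym => /(tuple_permP (t := in_tuple _)) [s eqJ].
by exists s^-1%g; rewrite perm_act_tuple invgK.
Qed.

Definition bhs_seq (u : NN) : seq nat := flatten [seq nseq (u i) i | i <- finsupp u].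

Lemma count_bhs_seq (u : NN) j : count_mem j (bhs_seq u) = u j.
Proof.
rewrite /bhs_seq count_flatten sumnE !big_map.
under eq_bigr do rewrite count_nseq /=.
have [j_in | j_notin] := boolP (j \in finsupp u).
  rewrite (bigD1_seq j) ?fset_uniq //= eqxx mul1n big1 ?addn0 //.
  by move=> i /negPf ->.
rewrite big1_seq => [|i /andP [_ i_in]]; last by case: eqP i_in j_notin => // -> ->.
by move: j_notin; rewrite mem_finsupp negbK => /eqP.
Qed.

Lemma lev_weight_bhs_seq (u : NN) : lev_weight (bhs_seq u) = bhs_weight u.
Proof.
rewrite /lev_weight big_flatten big_map /bhs_weight; apply: eq_bigr => i _.
by rewrite big_nseq iter_addr_0 mulr_natl.
Qed.

Lemma is_level_bhs_seq (u : BHS) : is_level (bhs_seq (val u)).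
Proof. by rewrite /is_level lev_weight_bhs_seq; case/and3P: (valP u). Qed.

Definition ltree_of_bhs (u : BHS) : Ltree :=
  exist _ (bhs_seq (val u)) (is_level_bhs_seq u).

Lemma ltree_of_bhsK : cancel ltree_of_bhs ltype.
Proof.
move=> u; apply: val_inj; rewrite val_ltype; apply/fsfunP => i.
by rewrite ltype_funE count_bhs_seq.
Qed.

Lemma lev_weight_map_succ (s : seq nat) :
  lev_weight (map succn s) = 2%:R^-1 * lev_weight s.
Proof.
rewrite /lev_weight big_map mulr_sumr; apply: eq_bigr => x _.
by rewrite exprS invfM.
Qed.

Lemma mu_h2 (a b : seq nat) : mu h2 [:: a; b] = map succn a ++ map succn b.
Proof. by rewrite /mu /= cats0. Qed.

Lemma is_level_mu_h2 (I J : Ltree) : is_level (mu h2 [:: val I; val J]).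
Proof.
rewrite /is_level mu_h2 /lev_weight big_cat -!/(lev_weight _) !lev_weight_map_succ.
by move: (valP I) (valP J) => /eqP -> /eqP ->.
Qed.

Lemma val_ltree_prod (I J : Ltree) :
  val (ltree_prod I J) = map succn (val I) ++ map succn (val J).
Proof. by rewrite insubdK; [apply: mu_h2 | apply: is_level_mu_h2]. Qed.

Lemma ltype_ltree_prod (I J : Ltree) :
  ltype (ltree_prod I J) = bhs_dot (ltype I) (ltype J).
Proof.
have dot_ltype : bhs_dot_fun (ltype_fun I) (ltype_fun J) = ltype_fun (ltree_prod I J).
  apply/fsfunP => i; rewrite fsfun_fun [RHS]ltype_funE val_ltree_prod count_cat !count_map.
  case: i => [|j].
    rewrite !(@eq_count _ _ pred0) ?count_pred0 //.
    by case: ifP => // /imfsetP [].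
  rewrite mem_imfset; last exact: succn_inj.
  rewrite !(@eq_count _ (preim _ _) (pred1 j)) // !inE !finsupp_ltype_fun !ltype_funE.
  by case: ifPn => //; rewrite negb_or => /andP [/count_memPn -> /count_memPn ->].
by apply: val_inj; rewrite /bhs_dot !val_ltype dot_ltype insubdK //; apply: is_BHS_ltype_fun.
Qed.

Theorem proposition6p7 (F : fieldType)
    (phi : {linear FLev F -> FBHS F})
    (phi_basis : forall I : Ltree, phi << I >> = << ltype I >>) :
  [/\ forall v : FLev F, phi v = 0 <-> coinv_ker v,
      forall w : FBHS F, exists v : FLev F, phi v = w &
      forall a b : FLev F, phi (lev_mul a b) = bhs_mul (phi a) (phi b)].
Proof.
split.
- move=> v; split=> [/(linear_basis_map_kernel phi_basis ltree_of_bhsK) -> | [r [r_rel ->]]].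
    exists [seq (v@_x, ltree_of_bhs (ltype x), x) | x <- msupp v].
    split; last by rewrite big_map.
    by move=> _ /mapP [x _ ->]; apply/coinv_relP; rewrite ltree_of_bhsK.
  rewrite linear_sum big1_seq // => -[[c y] x] /andP [_ /r_rel /coinv_relP /= eqyx].
  rewrite linearZ linearB !phi_basis eqyx subrr; exact: scaler0.
- by move=> w; eexists; apply: (linear_basis_map_onto phi_basis ltree_of_bhsK).
- (* [lev_mul] and [bhs_mul] unfold to [malg_bilin ltree_prod] and [malg_bilin bhs_dot]. *)
  exact: linear_basis_map_bilin phi_basis ltype_ltree_prod.
Qed.
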